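(* Let $H,H'$ be heaps, $a$ an address, $v$ a value and $\tau$ an ownership well-formed type. If $H\approx_a H'$ and $\mathrm{own}(H,v,\tau)(a)=0$, then $\mathrm{own}(H,v,\tau)=\mathrm{own}(H',v,\tau)$.
   Context: Types $\tau ::= \{\nu:\mathtt{int}\mid\varphi\}\mid\tau\ \mathtt{ref}^r$, $\varphi$ a refinement formula, $r\in[0,1]$ rational. $\top_0=\{\nu:\mathtt{int}\mid\top\}$ and $\top_i=\top_{i-1}\ \mathtt{ref}^0$. A type is ownership well-formed if every subterm of the form $\tau'\ \mathtt{ref}^0$ has $\tau'=\top_n$ for some $n$ (the paper imposes this on all types). Values: integers or addresses; a heap is a finite partial map from addresses to values. Reachability $H\vdash v\Downarrow n$ is the smallest relation with: $v\in\mathbb Z$ implies $H\vdash v\Downarrow 0$; if $H\vdash v\Downarrow n$ and $H(a)=v$ then $H\vdash a\Downarrow n+1$. $H\approx_a H'$ iff $dom(H)=dom(H')$, $H(a')=H'(a')$ for all $a'\in dom(H)$ with $a'\neq a$, and for every $n$, $H\vdash a\Downarrow n$ iff $H'\vdash a\Downarrow n$. Ownership maps are functions from addresses to nonnegative rationals, added pointwise; $\{a\mapsto r\}$ maps $a$ to $r$ and all else to 0; $\emptyset$ is the zero map. $\mathrm{own}(H,v,\tau)=\{a\mapsto r\}+\mathrm{own}(H,H(a),\tau')$ if $v$ is an address $a\in dom(H)$ and $\tau=\tau'\ \mathtt{ref}^r$; otherwise $\emptyset$. *)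

From mathcomp Require Import all_boot all_order all_algebra.
Set Implicit Arguments. Unset Strict Implicit. Unset Printing Implicit Defensive.
Import Order.TTheory GRing.Theory Num.Theory.
Local Open Scope ring_scope.

Definition addr := nat.
Inductive value := VInt of int | VAddr of addr.

Definition heap := addr -> option value.
Definition heap_finite (H : heap) : Prop :=
  exists N : nat, forall a : addr, (N <= a)%N -> H a = None.
Definition in_dom (H : heap) (a : addr) : Prop := H a <> None.

(* Types, parameterized by the type [form] of refinement formulas. *)
Inductive typ (form : Type) :=
| TInt of form
| TRef of typ form & rat.
Arguments TInt {form}.
Arguments TRef {form}.

(* top_n, given the formula "true" [ftop] *)
Fixpoint top_n (form : Type) (ftop : form) (n : nat) : typ form :=
  match n with
  | O => TInt ftop
  | S m => TRef (top_n ftop m) 0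
  end.

Fixpoint typ_ok (form : Type) (t : typ form) : Prop :=
  match t with
  | TInt _ => True
  | TRef t' r => 0 <= r <= 1 /\ typ_ok t'
  end.

Fixpoint own_wf (form : Type) (ftop : form) (t : typ form) : Prop :=
  match t with
  | TInt _ => True
  | TRef t' r => (r = 0 -> exists n, t' = top_n ftop n) /\ own_wf ftop t'
  end.

Inductive reach (H : heap) : value -> nat -> Prop :=
| reach_int : forall z : int, reach H (VInt z) 0
| reach_addr : forall (a : addr) (v : value) (n : nat),
    reach H v n -> H a = Some v -> reach H (VAddr a) n.+1.

Definition heap_approx (a : addr) (H H' : heap) : Prop :=
  (forall a', in_dom H a' <-> in_dom H' a') /\
  (forall a', in_dom H a' -> a' <> a -> H a' = H' a') /\
  (forall n, reach H (VAddr a) n <-> reach H' (VAddr a) n).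

Definition omap := addr -> rat.
Definition omap0 : omap := fun _ => 0.
Definition omap1 (a : addr) (r : rat) : omap := fun a' => if a' == a then r else 0.
Definition omap_add (m1 m2 : omap) : omap := fun a' => m1 a' + m2 a'.

Fixpoint own (form : Type) (H : heap) (v : value) (t : typ form) : omap :=
  match t, v with
  | TRef t' r, VAddr a =>
      match H a with
      | Some w => omap_add (omap1 a r) (own H w t')
      | None => omap0
      end
  | _, _ => omap0
  end.

From mathcomp Require Import all_boot all_order all_algebra.
From Stdlib Require Import FunctionalExtensionality.
Set Implicit Arguments. Unset Strict Implicit. Unset Printing Implicit Defensive.
Import Order.TTheory GRing.Theory Num.Theory.
Local Open Scope ring_scope.

(* At a reference cell [b] with annotation [r], the
   ownership map is [{b |-> r}] plus the ownership of the pointee; both are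
   nonnegative, so [own(a) = 0] makes both vanish at [a]. If [b <> a], the
   two heaps agree at [b] and the induction hypothesis applies. If [b = a],
   then [r = 0], so well-formedness makes the pointee type some [top_n],
   whose ownership map is zero in every heap. *)

Section Ownership.

Variable form : Type.
Implicit Types (H : heap) (v : value) (t : typ form).

Lemma omap1_ge0 b r c : 0 <= r -> 0 <= omap1 b r c.
Proof. by rewrite /omap1; case: (c == b). Qed.

Lemma own_ge0 H v t c : typ_ok t -> 0 <= own H v t c.
Proof.
elim: t v => [f|t IHt r] [z|b] //= [/andP[r_ge0 _] ok_t].
case: (H b) => [w|] //.
by rewrite /omap_add addr_ge0 ?omap1_ge0 ?IHt.
Qed.

Lemma own_top (ftop : form) H v n : own H v (top_n ftop n) = omap0.
Proof.
elim: n v => [|n IHn] [z|b] //=; case: (H b) => [w|] //.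
rewrite IHn; apply: functional_extensionality => c.
by rewrite /omap_add /omap1 /omap0; case: (c == b); rewrite addr0.
Qed.

Lemma not_in_dom_eq H H' b :
  (forall c, in_dom H c <-> in_dom H' c) -> H b = None -> H' b = None.
Proof.
move=> same_dom Hb; case H'b: (H' b) => [w|] //.
suff: in_dom H b by rewrite /in_dom Hb.
by apply/same_dom; rewrite /in_dom H'b.
Qed.

Lemma own_eq_of_agree_off (ftop : form) H H' a v t :
  (forall c, in_dom H c <-> in_dom H' c) ->
  (forall c, in_dom H c -> c <> a -> H c = H' c) ->
  typ_ok t -> own_wf ftop t -> own H v t a = 0 ->
  own H v t = own H' v t.
Proof.
move=> same_dom agree.
elim: t v => [f|t IHt r] [z|b] //= [/andP[r_ge0 _] ok_t] [wf_r wf_t].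
case Hb: (H b) => [w|]; last by rewrite (not_in_dom_eq same_dom Hb).
move=> /eqP; rewrite /omap_add paddr_eq0 ?omap1_ge0 ?own_ge0 //.
move=> /andP[/eqP own1_a /eqP own_w_a].
have in_b : in_dom H b by rewrite /in_dom Hb.
have [eq_ba|/eqP neq_ba] := eqVneq b a.
- move: own1_a; rewrite /omap1 -eq_ba eqxx => /wf_r[n ->].
  case H'b: (H' b) => [w'|]; last by move/same_dom: in_b; rewrite /in_dom H'b.
  by rewrite !own_top.
- by rewrite -(agree b in_b neq_ba) Hb (IHt w).
Qed.

End Ownership.

Theorem lemma19 (form : Type) (ftop : form) (H H' : heap) (a : addr)
  (v : value) (t : typ form) :
  heap_finite H -> heap_finite H' -> typ_ok t -> own_wf ftop t ->
  heap_approx a H H' ->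
  own H v t a = 0%R ->
  own H v t = own H' v t.
Proof.
move=> _ _ ok_t wf_t [same_dom [agree _]].
exact: (own_eq_of_agree_off same_dom agree ok_t wf_t).
Qed.
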